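(* Let $\bar x \in \mathrm{dom}\,\psi$, let $A>0$, and let $T = T_A(\bar x)$. Then for all $y \in \mathrm{dom}\,\psi$, $$M_A(\bar x, y) \;\geq\; M_A(\bar x) + \tfrac12 \langle \nabla^2 f(\bar x)(y - T), y - T\rangle + \tfrac12 \sigma A \|y - T\|^2 .$$ Moreover, $$\|T_A(\bar x) - \bar x\| \;\leq\; \frac{1}{\sigma A}\, \|F'(\bar x)\|_*,$$ where $F'(\bar x) = \nabla f(\bar x) + \psi'(\bar x)$ and $\psi'(\bar x)$ is an arbitrary element of $\partial\psi(\bar x)$.
   Context: $\mathbb{E}$ is a finite-dimensional real vector space with an arbitrary norm $\|\cdot\|$; $\mathbb{E}^*$ is its dual space with dual norm $\|g\|_* = \max\{\langle g, x\rangle : \|x\|\le 1\}$. We consider $F(x) = f(x) + \psi(x)$, where $\psi$ is a closed convex function with $\mathrm{dom}\,\psi \subseteq \mathbb{E}$ and $f$ is a convex, twice continuously differentiable function. The scaling function $d$ is differentiable and satisfies, for some $\sigma \in (0,1]$ and all $x, y \in \mathrm{dom}\,\psi$: $d(y) \ge d(x) + \langle \nabla d(x), y - x\rangle + \frac{\sigma}{2}\|y-x\|^2$ and $\|\nabla d(x) - \nabla d(y)\|_* \le \|x - y\|$. The Bregman distance is $\rho(x,y) = d(y) - d(x) - \langle \nabla d(x), y - x\rangle$. For $\bar x \in \mathrm{dom}\,\psi$ and $A > 0$ define $$M_A(\bar x, y) = f(\bar x) + \langle \nabla f(\bar x), y - \bar x\rangle + \tfrac12\langle \nabla^2 f(\bar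 x)(y-\bar x), y - \bar x\rangle + A\rho(\bar x, y) + \psi(y),$$ $T_A(\bar x) = \arg\min_{y \in \mathrm{dom}\,\psi} M_A(\bar x, y)$, and $M_A(\bar x) = M_A(\bar x, T_A(\bar x))$. *)

From HB Require Import structures.
From mathcomp Require Import all_boot all_order all_algebra.
From mathcomp Require Import all_classical all_reals all_analysis.
Set Implicit Arguments. Unset Strict Implicit. Unset Printing Implicit Defensive.
Import Order.TTheory GRing.Theory Num.Theory.
Import numFieldNormedType.Exports.
Local Open Scope classical_set_scope.
Local Open Scope ring_scope.

(* The space E is modelled as 'rV[R]_n (finite dimensional real vector space);
   the dual space E^* is identified with 'rV[R]_n via the standard pairing
   <g, x> = \sum_i g_i x_i. *)
Definition pairing (R : realType) (n : nat) (g x : 'rV[R]_n) : R :=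
  \sum_(i < n) g ord0 i * x ord0 i.

Definition is_norm (R : realType) (n : nat) (N : 'rV[R]_n -> R) : Prop :=
  [/\ forall x, 0 <= N x,
      forall x, N x = 0 -> x = 0,
      forall (a : R) x, N (a *: x) = `|a| * N x
    & forall x y, N (x + y) <= N x + N y].

Definition dual_norm (R : realType) (n : nat) (N : 'rV[R]_n -> R) (g : 'rV[R]_n) : R :=
  sup [set pairing g x | x in [set x | N x <= 1]].

Definition hess_app (R : realType) (n : nat) (H : 'M[R]_n) (v : 'rV[R]_n) : 'rV[R]_n :=
  v *m H.

Definition convex_fun (R : realType) (n : nat) (f : 'rV[R]_n -> R) : Prop :=
  forall x y (t : R), 0 <= t <= 1 ->
    f (t *: x + (1 - t) *: y) <= t * f x + (1 - t) * f y.

Definition dom (R : realType) (n : nat) (psi : 'rV[R]_n -> \bar R) : set 'rV[R]_n :=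
  [set x | (psi x < +oo)%E].

Definition proper_closed_convex (R : realType) (n : nat) (psi : 'rV[R]_n -> \bar R) : Prop :=
  [/\ forall x, (-oo < psi x)%E,
      exists x, (psi x < +oo)%E,
      closed [set p : 'rV[R]_n * R | (psi p.1 <= p.2%:E)%E]
    & forall (x y : 'rV[R]_n) (t : R), 0 < t < 1 ->
        (psi ((t *: x + (1 - t) *: y)%R) <= t%:E * psi x + (1 - t)%:E * psi y)%E].

Definition subdiff (R : realType) (n : nat) (psi : 'rV[R]_n -> \bar R) (x : 'rV[R]_n)
  : set 'rV[R]_n :=
  [set g | forall y : 'rV[R]_n, (psi x + (pairing g (y - x)%R)%:E <= psi y)%E].

Definition bregman (R : realType) (n : nat) (d : 'rV[R]_n -> R) (gd : 'rV[R]_n -> 'rV[R]_n)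
  (x y : 'rV[R]_n) : R :=
  d y - d x - pairing (gd x) (y - x).

Definition model (R : realType) (n : nat) (f : 'rV[R]_n -> R) (gf : 'rV[R]_n -> 'rV[R]_n)
  (Hf : 'rV[R]_n -> 'M[R]_n) (d : 'rV[R]_n -> R) (gd : 'rV[R]_n -> 'rV[R]_n)
  (psi : 'rV[R]_n -> \bar R) (A : R) (xb y : 'rV[R]_n) : \bar R :=
  ((f xb + pairing (gf xb) (y - xb)
    + 2^-1 * pairing (hess_app (Hf xb) (y - xb)) (y - xb)
    + A * bregman d gd xb y)%:E + psi y)%E.

(* Minimality of T for the model M_A(xb, .) is used only through the
   directional derivative of M_A(xb, .) at T towards y: the smooth part of the
   model is a quadratic with Hessian [Hf xb] plus [A] times the Bregman
   distance, and [psi] is convex, so comparing M_A(xb, T) with the values on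
   the segment [T, y] and letting the step go to 0 yields
     M_A(xb, y) >= M_A(xb, T) + 1/2 <Hf xb (y - T), y - T> + A rho(T, y),
   and strong convexity of d gives rho(T, y) >= sigma/2 ||y - T||^2.
   Taking y = xb, expanding M_A(xb, T) and using the subgradient inequality for
   psi at xb and positive semidefiniteness of the Hessian of the convex f, one
   gets  sigma A ||T - xb||^2 <= <F'(xb), xb - T> <= ||F'(xb)||_* ||T - xb||. *)

From HB Require Import structures.
From mathcomp Require Import all_boot all_order all_algebra.
From mathcomp Require Import all_classical all_reals all_analysis.
From mathcomp Require Import ring lra.
Import Order.TTheory GRing.Theory Num.Theory.
Import numFieldNormedType.Exports.
Local Open Scope classical_set_scope.
Local Open Scope ring_scope.
Set Implicit Arguments. Unset Strict Implicit.

Section Pairing.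
Variables (R : realType) (n : nat).
Implicit Types (g x : 'rV[R]_n).

Lemma pairingDl g1 g2 x : pairing (g1 + g2) x = pairing g1 x + pairing g2 x.
Proof. by rewrite /pairing -big_split; apply: eq_bigr => i _; rewrite !mxE mulrDl. Qed.

Lemma pairingDr g x1 x2 : pairing g (x1 + x2) = pairing g x1 + pairing g x2.
Proof. by rewrite /pairing -big_split; apply: eq_bigr => i _; rewrite !mxE mulrDr. Qed.

Lemma pairingZl a g x : pairing (a *: g) x = a * pairing g x.
Proof. by rewrite /pairing mulr_sumr; apply: eq_bigr => i _; rewrite !mxE mulrA. Qed.

Lemma pairingZr a g x : pairing g (a *: x) = a * pairing g x.
Proof. by rewrite /pairing mulr_sumr; apply: eq_bigr => i _; rewrite !mxE mulrCA. Qed.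

Lemma pairingNl g x : pairing (- g) x = - pairing g x.
Proof. by rewrite -scaleN1r pairingZl mulN1r. Qed.

Lemma pairingNr g x : pairing g (- x) = - pairing g x.
Proof. by rewrite -scaleN1r pairingZr mulN1r. Qed.

Lemma pairing0r g : pairing g 0 = 0.
Proof. by rewrite -(scale0r 0) pairingZr mul0r. Qed.

Lemma pairing_continuousl x : continuous (fun g : 'rV[R]_n => pairing g x).
Proof.
move=> g; apply: (@continuous_big R^o _ +%R 0 (fun _ => true)) => //.
  exact: add_continuous.
move=> i _ h; apply: cvgMr_tmp; first exact: nbhs_filter.
exact: (@coord_continuous R 1 n ord0 i h).
Qed.

Lemma normr_coord_le x i : `|x ord0 i| <= `|x|.
Proof.
by rewrite [leRHS]/Num.norm /= mx_normrE; apply/bigmax_geP; right; exists (ord0, i).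
Qed.

Lemma pairing_le_mx_norm g x : pairing g x <= (\sum_i `|g ord0 i|) * `|x|.
Proof.
rewrite /pairing mulr_suml; apply: ler_sum => i _.
by rewrite (le_trans (ler_norm _)) // normrM ler_wpM2l ?normr_coord_le.
Qed.

End Pairing.

Lemma cvg_at0_ge (R : realType) (h : R -> R) l c :
  h @ 0^' --> l -> (forall t, 0 < t < 1 -> c <= h t) -> c <= l.
Proof.
move=> hl hc.
have hr : h @ 0^'+ --> l.
  move=> A /hl /nbhs_ballP [_ /posnumP[e] xe_A].
  by exists e%:num => //= y xe_y /gt_eqF/negbT/xe_A; exact.
apply: (cvgr_to_ge hr); near=> t; apply: hc; apply/andP; split.
  by near: t; exact: nbhs_right_gt.
by near: t; exact: nbhs_right_lt.
Unshelve. all: by end_near. Qed.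

Section DirectionalDerivative.
Variables (R : realType) (V : normedModType R).

Lemma diff_quotient_cvg (W : normedModType R) (phi : V -> W) a v :
  differentiable phi a ->
  (fun t : R => t^-1 *: (phi (t *: v + a) - phi a)) @ 0^' --> 'd phi a v.
Proof. by move=> dphi; rewrite -deriveE //; exact: diff_derivable. Qed.

Lemma diff_ge (phi : V -> R^o) a v c K :
  differentiable phi a ->
  (forall t, 0 < t < 1 -> t * c <= phi (a + t *: v) - phi a + t ^+ 2 * K) ->
  c <= 'd phi a v.
Proof.
move=> dphi hc.
have hl : (fun t : R => t^-1 *: (phi (t *: v + a) - phi a) + t * K) @ 0^'
    --> 'd phi a v.
  rewrite -[X in _ --> X]addr0; apply: cvgD; first exact: diff_quotient_cvg.
  rewrite -[X in _ --> X](mul0r K); apply: cvgMr_tmp.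
  exact: cvg_within_filter cvg_id.
apply: (cvg_at0_ge hl) => t /andP[t0 t1] /=.
rewrite -(ler_pM2l t0) mulrDr -[_ *: _]/(_ * _) mulrA mulfV ?gt_eqF // mul1r.
by rewrite mulrA -expr2 [t *: v + a]addrC; apply: hc; rewrite t0.
Qed.

Lemma diff_le (phi : V -> R^o) a v c :
  differentiable phi a ->
  (forall t, 0 < t < 1 -> phi (a + t *: v) - phi a <= t * c) -> 'd phi a v <= c.
Proof.
move=> dphi hc; rewrite -lerN2.
have := @diff_ge (- phi) a v (- c) 0 (differentiableN dphi).
rewrite diffN //; apply=> t /hc h; rewrite mulr0 addr0 mulrN.
by rewrite -![(- phi) _]/(- phi _); lra.
Qed.

End DirectionalDerivative.

Section NormOnRows.
Variables (R : realType) (n : nat) (N : 'rV[R]_n -> R).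
Hypothesis hN : is_norm N.
Implicit Types (g x : 'rV[R]_n).

Lemma is_norm_ge0 x : 0 <= N x. Proof. by case: hN => ge0 _ _ _; exact: ge0. Qed.

Lemma is_norm_eq0 x : N x = 0 -> x = 0. Proof. by case: hN => _ eq0 _ _; exact: eq0. Qed.

Lemma is_normZ a x : N (a *: x) = `|a| * N x. Proof. by case: hN => _ _ Z _; exact: Z. Qed.

Lemma is_normD x y : N (x + y) <= N x + N y. Proof. by case: hN => _ _ _ D; exact: D. Qed.

Lemma is_norm0 : N 0 = 0.
Proof. by rewrite -(scale0r 0) is_normZ normr0 mul0r. Qed.

Lemma is_normN x : N (- x) = N x.
Proof. by rewrite -scaleN1r is_normZ normrN normr1 mul1r. Qed.

Lemma is_norm_gt0 x : x != 0 -> 0 < N x.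
Proof. by move=> x0; rewrite lt_def is_norm_ge0 andbT; apply: contra_neqN x0 => /eqP/is_norm_eq0. Qed.

Lemma is_norm_sum (I : Type) (r : seq I) (F : I -> 'rV[R]_n) :
  N (\sum_(i <- r) F i) <= \sum_(i <- r) N (F i).
Proof.
elim/big_rec2: _ => [|i y1 y2 _ IH]; first by rewrite is_norm0.
by rewrite (le_trans (is_normD _ _)) // lerD2l.
Qed.

Lemma is_norm_le_mx_norm x : N x <= (\sum_i N (delta_mx ord0 i)) * `|x|.
Proof.
rewrite [x in N x]row_sum_delta (le_trans (is_norm_sum _ _)) // mulr_suml.
apply: ler_sum => i _; rewrite is_normZ mulrC.
by rewrite ler_wpM2l ?is_norm_ge0 ?normr_coord_le.
Qed.

Lemma is_norm_continuous : continuous N.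
Proof.
set K := \sum_i N (delta_mx ord0 i).
have K0 : 0 <= K by apply: sumr_ge0 => i _; exact: is_norm_ge0.
move=> x; apply/(@cvgrPdist_lt _ _ _ _ (nbhs_filter x)) => e e0.
apply/nbhs_ballP; exists (e / (K + 1)); first by apply: divr_gt0 => //; rewrite ltr_wpDl.
move=> y; rewrite -ball_normE /= => xy_e.
have Nxy : N (x - y) < e.
  apply: le_lt_trans (is_norm_le_mx_norm _) _.
  apply: le_lt_trans (_ : (K + 1) * `|x - y| < e); first by rewrite ler_wpM2r // lerDl.
  by rewrite mulrC -ltr_pdivlMr ?ltr_wpDl.
have := is_normD (x - y) y; have := is_normD (y - x) x.
rewrite !subrK -opprB is_normN ltr_norml => ? ?; apply/andP; split; lra.
Qed.

(* N attains a positive minimum on the compact unit sphere of the sup norm. *)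
Lemma is_norm_ge_mx_norm : exists2 c, 0 < c & forall x, c * `|x| <= N x.
Proof.
set S := [set x : 'rV[R]_n | `|x| = 1].
have inS x : x != 0 -> S (`|x|^-1 *: x).
  by move=> x0; rewrite /S /= normrZ ger0_norm ?invr_ge0 // mulVf ?normr_eq0.
have [S0|S0] := pselect (S !=set0); last first.
  exists 1 => // x; have [->|x0] := eqVneq x 0; first by rewrite normr0 mulr0 is_norm_ge0.
  by exfalso; apply: S0; exists (`|x|^-1 *: x); exact: inS.
have cS : compact S.
  apply: bounded_closed_compact.
    by exists 1; split => // M M1 x /= ->; exact: ltW.
  apply: (@preimage_closed _ _ (fun x : 'rV[R]_n => `|x|) [set 1]); last exact: closed_eq.
  by move=> ? _; exact: norm_continuous.
have [c0 Sc0 hmin] := EVT_min_rV S0 cS (continuous_subspaceT is_norm_continuous).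
have Nc0 : 0 < N c0.
  apply/is_norm_gt0/eqP => c00; move: Sc0.
  by rewrite inE /S /= c00 normr0 => /eqP; rewrite eq_sym oner_eq0.
exists (N c0) => // x; have [->|x0] := eqVneq x 0.
  by rewrite normr0 mulr0 is_norm_ge0.
have := hmin _ (mem_set (inS x x0)); rewrite is_normZ ger0_norm ?invr_ge0 //.
by rewrite -ler_pdivlMr ?normr_gt0 // mulrC.
Qed.

Lemma dual_norm_has_sup g : has_sup [set pairing g x | x in [set x | N x <= 1]].
Proof.
have [c c0 hc] := is_norm_ge_mx_norm.
split; first by exists (pairing g 0), 0 => //=; rewrite is_norm0.
exists ((\sum_i `|g ord0 i|) / c) => _ [x /= Nx1 <-].
rewrite (le_trans (pairing_le_mx_norm g x)) // ler_wpM2l ?sumr_ge0 //.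
by rewrite -[c^-1]mul1r ler_pdivlMr // mulrC (le_trans (hc x)).
Qed.

Lemma dual_norm_ge0 g : 0 <= dual_norm N g.
Proof.
apply: (sup_upper_bound (dual_norm_has_sup g)).
by exists 0; rewrite /= ?is_norm0 ?pairing0r.
Qed.

Lemma pairing_le_dual_norm g x : pairing g x <= dual_norm N g * N x.
Proof.
have [->|x0] := eqVneq x 0; first by rewrite pairing0r is_norm0 mulr0.
have Nx := is_norm_gt0 x0.
suff : pairing g ((N x)^-1 *: x) <= dual_norm N g.
  by rewrite pairingZr -ler_pdivrMr // mulrC.
apply: (sup_upper_bound (dual_norm_has_sup g)); exists ((N x)^-1 *: x) => //=.
by rewrite is_normZ ger0_norm ?invr_ge0 ?is_norm_ge0 // mulVf ?gt_eqF.
Qed.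

End NormOnRows.

Lemma segment_rV (R : realType) (n : nat) (x y : 'rV[R]_n) (t : R) :
  x + t *: (y - x) = t *: y + (1 - t) *: x.
Proof. by apply/rowP => i; rewrite !mxE; ring. Qed.

Section ConvexSmooth.
Variables (R : realType) (n : nat) (f : 'rV[R]_n -> R).
Variables (gf : 'rV[R]_n -> 'rV[R]_n) (Hf : 'rV[R]_n -> 'M[R]_n).
Hypothesis f_convex : convex_fun f.
Hypothesis f_grad : forall x,
  differentiable f x /\ ('d f x : 'rV[R]_n -> R) = pairing (gf x).
Hypothesis f_hess : forall x,
  differentiable gf x /\ ('d gf x : 'rV[R]_n -> 'rV[R]_n) = hess_app (Hf x).

Lemma convex_grad_le x y : f x + pairing (gf x) (y - x) <= f y.
Proof.
have [dfx dfxE] := f_grad x.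
suff : 'd f x (y - x) <= f y - f x by rewrite dfxE; lra.
apply: diff_le => // t /andP[t0 t1]; rewrite segment_rV.
by have := f_convex y x (t := t); rewrite (ltW t0) (ltW t1) => /(_ isT); lra.
Qed.

Lemma grad_monotone x y : 0 <= pairing (gf y - gf x) (y - x).
Proof.
have := convex_grad_le x y; have := convex_grad_le y x.
by rewrite pairingDl pairingNl -opprB pairingNr; lra.
Qed.

Lemma hessian_psd x u : 0 <= pairing (u *m Hf x) u.
Proof.
have [dgfx dgfxE] := f_hess x.
have := cvg_comp _ _ (diff_quotient_cvg dgfx) (@pairing_continuousl R n u ('d gf x u)).
rewrite dgfxE => hl; apply: (cvg_at0_ge hl) => t /andP[t0 _] /=.
rewrite pairingZl mulr_ge0 ?invr_ge0 ?(ltW t0) //.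
by have := grad_monotone x (t *: u + x); rewrite addrK pairingZr pmulr_rge0.
Qed.

End ConvexSmooth.

Lemma dom_EFin (R : realType) (n : nat) (psi : 'rV[R]_n -> \bar R) z :
  (-oo < psi z)%E -> z \in dom psi -> exists r, psi z = r%:E.
Proof. by rewrite inE /dom /=; case: (psi z) => // r _ _; exists r. Qed.

Section Model.
Variables (R : realType) (n : nat) (f : 'rV[R]_n -> R) (gf : 'rV[R]_n -> 'rV[R]_n).
Variables (Hf : 'rV[R]_n -> 'M[R]_n) (d : 'rV[R]_n -> R) (gd : 'rV[R]_n -> 'rV[R]_n).
Variables (psi : 'rV[R]_n -> \bar R) (A : R) (xb : 'rV[R]_n).

Definition model_smooth y : R :=
  f xb + pairing (gf xb) (y - xb)
  + 2^-1 * pairing (hess_app (Hf xb) (y - xb)) (y - xb) + A * bregman d gd xb y.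

Local Notation M := (model f gf Hf d gd psi A xb).
Local Notation S := model_smooth.
Local Notation Q h := (pairing (hess_app (Hf xb) h) h).

Lemma modelE y : M y = ((S y)%:E + psi y)%E.
Proof. by []. Qed.

Lemma model_smooth_center : S xb = f xb.
Proof. by rewrite /S /bregman /hess_app subrr mul0mx !pairing0r; ring. Qed.

(* Apart from the Bregman term, [S] is quadratic with Hessian [Hf xb]. *)
Lemma model_smooth_segment T y t :
  S (T + t *: (y - T)) = (1 - t) * S T + t * S y - t * (1 - t) / 2 * Q (y - T)
    + A * (d (T + t *: (y - T)) - (1 - t) * d T - t * d y).
Proof.
rewrite /S /bregman /hess_app.
have -> : T + t *: (y - T) - xb = (T - xb) + t *: (y - T).
  by apply/rowP => i; rewrite !mxE; ring.
have -> : y - xb = (T - xb) + (y - T) by rewrite [RHS]addrC addrA subrK.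
set u := T - xb; set h := y - T; clearbody u h.
by rewrite !mulmxDl -!scalemxAl !pairingDl !pairingDr !pairingZl !pairingZr; ring.
Qed.

Variable T : 'rV[R]_n.
Hypothesis psi_gtNy : forall x, (-oo < psi x)%E.
Hypothesis psi_convex : forall x y t, 0 < t < 1 ->
  (psi (t *: x + (1 - t) *: y) <= t%:E * psi x + (1 - t)%:E * psi y)%E.
Hypothesis d_grad : forall x,
  differentiable d x /\ ('d d x : 'rV[R]_n -> R) = pairing (gd x).
Hypothesis A_gt0 : 0 < A.
Hypothesis T_dom : T \in dom psi.
Hypothesis T_min : forall y, y \in dom psi -> (M T <= M y)%E.

Lemma model_min_growth y : y \in dom psi ->
  (M T + (2^-1 * Q (y - T) + A * bregman d gd T y)%:E <= M y)%E.
Proof.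
move=> y_dom; have [pT pTE] := dom_EFin (psi_gtNy T) T_dom.
have [py pyE] := dom_EFin (psi_gtNy y) y_dom.
rewrite !modelE pTE pyE -!EFinD lee_fin /bregman.
set h := y - T; set gap := S y + py - (S T + pT) - A * (d y - d T) - Q h / 2.
suff : - gap / A <= 'd d T h.
  by have [_ ->] := d_grad T; rewrite ler_pdivrMr // /gap => ?; lra.
apply: (@diff_ge _ _ d T h _ (Q h / (2 * A))); first by case: (d_grad T).
move=> t /andP[t0 t1]; set z := T + t *: h.
have pz_le : (psi z <= (t * py + (1 - t) * pT)%:E)%E.
  by rewrite /z segment_rV EFinD !EFinM -pyE -pTE psi_convex ?t0.
have z_dom : z \in dom psi by rewrite inE /dom /= (le_lt_trans pz_le) ?ltry.
have [pz pzE] := dom_EFin (psi_gtNy z) z_dom.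
(* Minimality at [z] and convexity of [psi] give [0 <= t * gap + t^2 Q h / 2 + A (d z - d T)]. *)
have := T_min z_dom; rewrite !modelE pTE pzE -EFinD lee_fin model_smooth_segment.
rewrite pzE lee_fin in pz_le.
rewrite -/h -/z => z_ge; rewrite -(ler_pM2l A_gt0).
have -> : A * (t * (- gap / A)) = - (t * gap) by field; rewrite gt_eqF.
have -> : A * (d z - d T + t ^+ 2 * (Q h / (2 * A)))
    = A * (d z - d T) + t ^+ 2 * Q h / 2 by field; rewrite gt_eqF.
rewrite /gap; lra.
Qed.

Variables (N : 'rV[R]_n -> R) (sigma : R).
Hypothesis d_strong : forall x y, x \in dom psi -> y \in dom psi ->
  d x + pairing (gd x) (y - x) + sigma / 2 * N (y - x) ^+ 2 <= d y.

Lemma model_min_quadratic_growth y : y \in dom psi ->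
  (M T + (2^-1 * Q (y - T) + 2^-1 * sigma * A * N (y - T) ^+ 2)%:E <= M y)%E.
Proof.
move=> y_dom; apply: le_trans (model_min_growth y_dom); apply: leeD2l; rewrite lee_fin.
rewrite lerD2l /bregman; have := d_strong T_dom y_dom => d_ge.
have : sigma / 2 * N (y - T) ^+ 2 <= d y - d T - pairing (gd T) (y - T) by lra.
by move/(ler_wpM2l (ltW A_gt0)); lra.
Qed.

Hypothesis N_norm : is_norm N.
Hypothesis f_convex : convex_fun f.
Hypothesis f_grad : forall x,
  differentiable f x /\ ('d f x : 'rV[R]_n -> R) = pairing (gf x).
Hypothesis f_hess : forall x,
  differentiable gf x /\ ('d gf x : 'rV[R]_n -> 'rV[R]_n) = hess_app (Hf x).
Hypothesis xb_dom : xb \in dom psi.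

Lemma model_min_step_sqr g : g \in subdiff psi xb ->
  sigma * A * N (T - xb) ^+ 2 <= dual_norm N (gf xb + g) * N (T - xb).
Proof.
rewrite inE /subdiff /= => g_sub.
have [pT pTE] := dom_EFin (psi_gtNy T) T_dom.
have [px pxE] := dom_EFin (psi_gtNy xb) xb_dom.
have := model_min_quadratic_growth xb_dom.
rewrite !modelE model_smooth_center pTE pxE -!EFinD lee_fin /S /bregman /hess_app.
have := g_sub T; rewrite pxE pTE -EFinD lee_fin.
have := d_strong xb_dom T_dom; have := hessian_psd f_convex f_grad f_hess xb (T - xb).
have := pairing_le_dual_norm N_norm (gf xb + g) (xb - T).
rewrite -opprB mulNmx !pairingNl !pairingNr opprK is_normN // pairingDl.
set u := T - xb => pair_le Q_ge0 d_ge psi_ge.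
have : sigma / 2 * N u ^+ 2 <= d T - d xb - pairing (gd xb) u by lra.
by move/(ler_wpM2l (ltW A_gt0)); lra.
Qed.

Hypothesis sigma_gt0 : 0 < sigma.

Lemma model_min_step_le g : g \in subdiff psi xb ->
  N (T - xb) <= (sigma * A)^-1 * dual_norm N (gf xb + g).
Proof.
move=> /model_min_step_sqr; have sA_gt0 : 0 < sigma * A by rewrite mulr_gt0.
have [->|Nu_neq0] := eqVneq (N (T - xb)) 0.
  by move=> _; rewrite mulr_ge0 ?invr_ge0 ?(ltW sA_gt0) ?(dual_norm_ge0 N_norm).
have Nu_gt0 : 0 < N (T - xb) by rewrite lt_def Nu_neq0 (is_norm_ge0 N_norm).
by rewrite expr2 mulrA ler_pM2r // mulrC -ler_pdivlMr // mulrC.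
Qed.

End Model.

Unset Implicit Arguments.

Theorem lemma1 (R : realType) (n : nat) (N : 'rV[R]_n -> R)
  (f : 'rV[R]_n -> R) (gf : 'rV[R]_n -> 'rV[R]_n) (Hf : 'rV[R]_n -> 'M[R]_n)
  (psi : 'rV[R]_n -> \bar R)
  (d : 'rV[R]_n -> R) (gd : 'rV[R]_n -> 'rV[R]_n) (sigma : R)
  (xb : 'rV[R]_n) (A : R) (T : 'rV[R]_n) :
  is_norm N ->
  (* f convex, twice continuously differentiable, gradient gf, Hessian Hf *)
  convex_fun f ->
  (forall x, differentiable f x /\ ('d f x : 'rV[R]_n -> R) = pairing (gf x)) ->
  (forall x, differentiable gf x /\ ('d gf x : 'rV[R]_n -> 'rV[R]_n) = hess_app (Hf x)) ->
  continuous Hf ->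
  (* psi closed convex *)
  proper_closed_convex psi ->
  (* scaling function d *)
  0 < sigma <= 1 ->
  (forall x, differentiable d x /\ ('d d x : 'rV[R]_n -> R) = pairing (gd x)) ->
  (forall x y, x \in dom psi -> y \in dom psi ->
     d x + pairing (gd x) (y - x) + sigma / 2 * N (y - x) ^+ 2 <= d y) ->
  (forall x y, x \in dom psi -> y \in dom psi ->
     dual_norm N (gd x - gd y) <= N (x - y)) ->
  xb \in dom psi -> 0 < A ->
  (* T = T_A(xb) : the minimizer of M_A(xb, .) over dom psi *)
  T \in dom psi ->
  (forall y, y \in dom psi -> (model f gf Hf d gd psi A xb T <= model f gf Hf d gd psi A xb y)%E) ->
  (forall y, y \in dom psi ->
     (model f gf Hf d gd psi A xb T
       + (2^-1 * pairing (hess_app (Hf xb) (y - T)) (y - T)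
          + 2^-1 * sigma * A * N (y - T) ^+ 2)%:E
      <= model f gf Hf d gd psi A xb y)%E)
  /\ (forall g, g \in subdiff psi xb ->
        N (T - xb) <= (sigma * A)^-1 * dual_norm N (gf xb + g)).
Proof.
move=> N_norm f_convex f_grad f_hess _ [psi_gtNy _ _ psi_convex] /andP[sigma_gt0 _].
move=> d_grad d_strong _ xb_dom A_gt0 T_dom T_min; split=> [y|g].
  exact: (model_min_quadratic_growth psi_gtNy psi_convex d_grad A_gt0 T_dom T_min d_strong).
exact: (model_min_step_le psi_gtNy psi_convex d_grad A_gt0 T_dom T_min d_strong
          N_norm f_convex f_grad f_hess xb_dom sigma_gt0).
Qed.
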